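(* Let $U\subseteq\mathbb{R}^n$ and $1<p<2$. Then for every $k>0$ there exists a constant $C(k)>0$ such that for every two nonnegative functions $f\in L^{2,\infty}(U)$ and $g\in L^p(U)$ there exist functions $\tilde f\in L^{2,\infty}(U)$ and $\tilde g\in L^p(U)$ with $f+g=\tilde f+\tilde g$, $\tilde g\in\{0\}\cup(k,\infty]$ pointwise, $\tilde f\le k$, and $$\|\tilde f\|_{L^{2,\infty}(U)}^2+\|\tilde g\|_{L^p(U)}^p\le C(k)\left(\|f\|_{L^{2,\infty}(U)}^2+\|g\|_{L^p(U)}^p\right).$$
   Context: $L^{2,\infty}(U)$ is the weak $L^2$ space with quasinorm $\|f\|_{L^{2,\infty}(U)}=\sup_{t>0}t\,\mathcal{L}^n(\{x\in U:|f(x)|>t\})^{1/2}$. *)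

From HB Require Import structures.
From mathcomp Require Import all_boot all_order all_algebra.
From mathcomp Require Import all_classical all_reals all_analysis.
From mathcomp Require Import measurable_realfun.
Set Implicit Arguments. Unset Strict Implicit. Unset Printing Implicit Defensive.
Import Order.TTheory GRing.Theory Num.Theory.
Local Open Scope classical_set_scope.
Local Open Scope ring_scope.

Record mspace (R : realType) := MSpace {
  ms_disp : measure_display;
  ms_car : measurableType ms_disp;
  ms_meas : {measure set ms_car -> \bar R} }.

(* R^n with its n-dimensional Lebesgue measure on Borel sets, built as the
   iterated product  ((unit * R) * R) * ... * R  of one-dimensional
   Lebesgue measures (R^0 is a point with the Dirac mass), i.e.
   lambda_{n+1} = lambda_n \x lambda_1. *)
Definition leb1 (R : realType) : {sigma_finite_measure set (measurableTypeR R) -> \bar R} :=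
  @lebesgue_measure R.

Fixpoint lebRn (R : realType) (n : nat) : mspace R :=
  match n with
  | 0 => @MSpace R _ unit (@dirac _ unit tt R)
  | n'.+1 => let M := lebRn R n' in
      @MSpace R _ _
        ((ms_meas M) \x (leb1 R))%E
  end.

Definition Rn (R : realType) (n : nat) := ms_car (lebRn R n).
Definition lebesgue_n (R : realType) (n : nat)
  : {measure set Rn R n -> \bar R} := ms_meas (lebRn R n).

Local Open Scope ereal_scope.

Definition weakL2norm d (T : measurableType d) (R : realType)
  (mu : set T -> \bar R) (f : T -> \bar R) : \bar R :=
  ereal_sup [set (t%:E * (mu [set x | t%:E < `|f x|]) `^ (2^-1)%R)
            | t in [set t : R | (0 < t)%R]].

(* Split f + g at height k: the part below k is f~, the part above k is g~.
   For t < k, {f~ > t} lies in {f > t/2} u {g > t/2}, and Chebyshev together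
   with t/2 <= k bounds t^2 mu{g > t/2} by 4 k^(2-p) |g|_p^p; for t >= k the
   level set is empty.  Above k, (f + g)^p <= 2^p max(f, g)^p, and when the
   maximum is f it exceeds k/2.  Since p < 2, cutting {f > k/2} into the dyadic
   layers 2^j k/2 < f <= 2^(j+1) k/2 bounds the integral of f^p there by a
   geometric series of ratio 2^p/4 times |f|_{2,oo}^2.  Nothing uses that the
   measure is Lebesgue measure restricted to U. *)

From HB Require Import structures.
From mathcomp Require Import all_boot all_order all_algebra.
From mathcomp Require Import all_classical all_reals all_analysis.
From mathcomp Require Import measurable_realfun.
From mathcomp Require Import ring lra.
Set Implicit Arguments. Unset Strict Implicit. Unset Printing Implicit Defensive.
Import Order.TTheory GRing.Theory Num.Theory.
Local Open Scope classical_set_scope.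
Local Open Scope ring_scope.
Local Open Scope ereal_scope.

(* The integral of a nonnegative function is a supremum over the simple
   functions below it, so monotonicity needs no measurability. *)
Lemma ge0_le_integral_nonmeasurable d (T : measurableType d) (R : realType)
    (mu : {measure set T -> \bar R}) (f g : T -> \bar R) :
  (forall x, 0 <= f x) -> (forall x, f x <= g x) ->
  \int[mu]_x f x <= \int[mu]_x g x.
Proof.
move=> f0 fg; rewrite ge0_integralE// [leRHS]ge0_integralE => [|x _]; last first.
  exact: le_trans (f0 x) (fg x).
apply: le_ereal_sup => _ /= [h hf <-]; exists h => //= x.
by apply: le_trans (hf x) _; rewrite /patch; case: ifP.
Qed.

Lemma nneseries_geometric_le (R : realType) (K r : R) :
  (0 <= K)%R -> (0 < r)%R -> (r < 1)%R ->
  \sum_(j <oo) (K * r ^+ j)%:E <= (K / (1 - r))%:E.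
Proof.
move=> K0 r0 r1; apply: lime_le.
  by apply: is_cvg_nneseries => n _ _; rewrite lee_fin mulr_ge0 // exprn_ge0 // ltW.
apply: nearW => n; rewrite sumEFin lee_fin.
by apply: geometric_le_lim; rewrite ?gtr0_norm.
Qed.

Lemma nneseries_ge_cst_pinfty (R : realType) (u : (\bar R)^nat) (c : R) :
  (0 < c)%R -> (forall n, c%:E <= u n) -> \sum_(n <oo) u n = +oo.
Proof.
move=> c0 cu; have u0 n : 0 <= u n by apply: le_trans (cu n); rewrite lee_fin ltW.
have sum_ge n : (c *+ n)%:E <= \sum_(n <oo) u n.
  apply: le_trans (nneseries_lim_ge n (fun i _ _ => u0 i)).
  have -> : (c *+ n = \sum_(0 <= i < n) c)%R by rewrite sumr_const_nat subn0.
  by rewrite -sumEFin; apply: lee_sum => i _.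
have sum_ge0 : 0 <= \sum_(n <oo) u n by exact: nneseries_ge0.
move: sum_ge sum_ge0; case: (\sum_(n <oo) u n) => [s sum_ge s0| |] //.
have := sum_ge (Num.bound (s / c)).
rewrite lee_fin -mulr_natl -ler_pdivlMr // => bound_le.
by have := lt_le_trans (archi_boundP (divr_ge0 s0 (ltW c0))) bound_le; rewrite ltxx.
Qed.

Section weakL2norm.
Context d (T : measurableType d) (R : realType) (mu : {measure set T -> \bar R}).
Implicit Types h : T -> \bar R.

Lemma weakL2norm_ge0 h : 0 <= weakL2norm mu h.
Proof.
apply: le_trans (ereal_sup_ubound _) => /=; last by exists 1%R => //=; exact: ltr01.
by rewrite mule_ge0 ?poweR_ge0.
Qed.

Lemma weakL2norm_levelset_le h (w t : R) : weakL2norm mu h <= w%:E ->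
  (0 < t)%R -> (t ^+ 2)%:E * mu [set x | t%:E < `|h x|] <= (w ^+ 2)%:E.
Proof.
move=> hw t0.
have : t%:E * mu [set x | t%:E < `|h x|] `^ 2^-1 <= w%:E.
  by apply: le_trans hw; apply: ereal_sup_ubound; exists t.
case E: (mu _) => [m| |].
- have m0 : (0 <= m)%R by rewrite -lee_fin -E.
  rewrite poweR_EFin powR12_sqrt // -EFinM !lee_fin => tm_le.
  have tm0 : (0 <= t * Num.sqrt m)%R by rewrite mulr_ge0 ?sqrtr_ge0 ?ltW.
  by rewrite -[m](sqr_sqrtr m0) -exprMn lerXn2r // nnegrE // (le_trans tm0).
- by rewrite poweRyr ?invr_neq0 // mulry gtr0_sg // mul1e leNgt ltry.
- by rewrite mulrNy gtr0_sg ?exprn_gt0 // mul1e leNye.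
Qed.

Lemma ge0_weakL2norm_levelset_le h (w t : R) : (forall x, 0 <= h x) ->
  weakL2norm mu h <= w%:E ->
  (0 < t)%R -> (t ^+ 2)%:E * mu [set x | t%:E < h x] <= (w ^+ 2)%:E.
Proof.
move=> h0 hw t0; have := weakL2norm_levelset_le hw t0.
by congr (_ * mu _ <= _); apply/seteqP; split => x /=; rewrite gee0_abs.
Qed.

Lemma weakL2norm_sqr_le h (B : R) :
  (forall t, (0 < t)%R -> (t ^+ 2)%:E * mu [set x | t%:E < `|h x|] <= B%:E) ->
  weakL2norm mu h `^ 2 <= B%:E.
Proof.
move=> hB; have B0 : (0 <= B)%R.
  by rewrite -lee_fin; apply: le_trans (hB 1%R ltr01); rewrite mule_ge0.
have : weakL2norm mu h <= (Num.sqrt B)%:E.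
  apply: ge_ereal_sup => _ [t t0 <-] /=.
  move: (hB t t0); case E: (mu _) => [m| |] tm_le.
  - have m0 : (0 <= m)%R by rewrite -lee_fin -E.
    rewrite poweR_EFin powR12_sqrt // -EFinM lee_fin -[t](ger0_norm (ltW t0)).
    by rewrite -sqrtr_sqr -sqrtrM ?sqr_ge0 // ler_wsqrtr.
  - by move: tm_le; rewrite mulry gtr0_sg ?exprn_gt0 // mul1e leNgt ltry.
  - by rewrite poweRNyr ?invr_neq0 // mule0 lee_fin sqrtr_ge0.
move/(gt0_ler_poweR (ler0n _ 2)); rewrite !in_itv /= weakL2norm_ge0 !leey lee_fin.
rewrite sqrtr_ge0 => /(_ isT isT); rewrite powR_mulrn ?sqrtr_ge0 //.
by rewrite sqr_sqrtr.
Qed.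

Lemma weakL2norm_mrestr_restrict (D : set T) (mD : measurable D) h :
  weakL2norm (mrestr mu mD) (h \_ D) = weakL2norm (mrestr mu mD) h.
Proof.
rewrite /weakL2norm; congr ereal_sup; apply: eq_imagel => t _.
congr (_ * (mu _ `^ _)); apply/seteqP; split=> x [/= htx Dx]; split=> //.
  by rewrite patchE mem_set in htx.
by rewrite patchE mem_set.
Qed.

End weakL2norm.

Lemma integral_restrict_poweR_le d (T : measurableType d) (R : realType)
    (mu : {measure set T -> \bar R}) (D : set T) (g : T -> \bar R) (p : R) :
  (forall x, D x -> 0 <= g x) -> (0 < p)%R ->
  \int[mu]_x (g \_ D) x `^ p <= 'N[mu]_p%:E[g] `^ p.
Proof.
move=> g0 p0; rewrite poweR_Lnorm ?gt_eqF //.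
apply: ge0_le_integral_nonmeasurable => x; first exact: poweR_ge0.
rewrite patchE; case: ifPn => [/set_mem Dx|_]; first by rewrite gee0_abs ?g0.
by rewrite poweR0r ?gt_eqF // poweR_ge0.
Qed.

Lemma dyadic_level_exists (R : realType) (a r : R) : (0 < a)%R -> (a < r)%R ->
  exists j, (2 ^+ j * a < r <= 2 ^+ j.+1 * a)%R.
Proof.
move=> a0 ar; have [|J rJ minJ] := ex_minnP (P := fun j => r <= 2 ^+ j.+1 * a)%R.
  exists (Num.bound (r / a)); apply/ltW; rewrite -ltr_pdivrMr //.
  have r0 : (0 <= r / a)%R by rewrite divr_ge0 // ltW // (lt_trans a0 ar).
  apply: lt_le_trans (archi_boundP r0) _.
  rewrite -natrX ler_nat expnS.
  by rewrite (leq_trans (ltnW (ltn_expl _ (ltnSn 1)))) // leq_pmull.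
exists J; rewrite rJ andbT; case: J rJ minJ => [|J] _ minJ; first by rewrite mul1r.
by rewrite ltNge; apply/negP => /minJ; rewrite ltnn.
Qed.

Lemma two_powR_lt4 (R : realType) (p : R) : (p < 2)%R -> (2 `^ p < 4 :> R)%R.
Proof.
move=> p2; have -> : (4 = 2 `^ 2 :> R)%R by rewrite powR_mulrn // expr2; ring.
by rewrite /powR !gt_eqF // ltr_expR ltr_pM2r // ln_gt0 // ltr1n.
Qed.

(* The geometric series bounding the layers 2^j a < F <= 2^(j+1) a. *)
Definition layer_cake_const (R : realType) (p a : R) : R :=
  (2 * a) `^ p / (a ^+ 2 * (1 - 2 `^ p / 4)).

Section layer_cake.
Context d (T : measurableType d) (R : realType) (mu : {measure set T -> \bar R}).
Variables (F : T -> \bar R) (p a : R).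
Hypotheses (p0 : (0 < p)%R) (a0 : (0 < a)%R).

Let level j := [set x | (2 ^+ j * a)%:E < F x].
Let height j := ((2 ^+ j.+1 * a) `^ p)%R.

Let height_ge j : (a `^ p <= height j)%R.
Proof.
have a_ge0 := ltW a0.
apply: (ge0_ler_powR (ltW p0)); rewrite ?nnegrE ?mulr_ge0 ?exprn_ge0 //.
by rewrite ler_peMl // exprn_ege1 // ler1n.
Qed.

Let term_ge0 x j : 0 <= (height j * \1_(level j) x)%:E.
Proof. by rewrite lee_fin mulr_ge0 ?powR_ge0. Qed.

Lemma poweR_le_dyadic_series x : a%:E < F x ->
  F x `^ p <= \sum_(j <oo) (height j * \1_(level j) x)%:E.
Proof.
case Fx: (F x) => [r| |] // ar.
  have [J /andP[Jr rJ]] := dyadic_level_exists a0 ar.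
  rewrite (nneseriesD1 (n := J)) // indicE mem_set /= ?mulr1; last first.
    by rewrite /level /= Fx.
  rewrite -[leLHS]adde0 leeD ?nneseries_ge0 // lee_fin.
  have Ja_gt0 : (0 < 2 ^+ J * a)%R by rewrite mulr_gt0 ?exprn_gt0.
  apply: (ge0_ler_powR (ltW p0)); rewrite ?nnegrE //.
    exact: ltW (lt_trans Ja_gt0 Jr).
  by rewrite mulr_ge0 ?exprn_ge0 // ltW.
rewrite [X in _ <= X](@nneseries_ge_cst_pinfty _ _ (a `^ p)) ?leey ?powR_gt0 //.
move=> j.
by rewrite indicE mem_set /= ?mulr1 ?lee_fin // /level /= Fx ltry.
Qed.

Hypotheses (mF : measurable_fun setT F) (F0 : forall x, 0 <= F x) (p2 : (p < 2)%R).
Variable w : R.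
Hypothesis Fw : weakL2norm mu F <= w%:E.

Let mlevel j : measurable (level j).
Proof.
by have := emeasurable_fun_o_infty measurableT mF (2 ^+ j * a)%:E; rewrite setTI.
Qed.

Let integral_term_le j : \int[mu]_x (height j * \1_(level j) x)%:E <=
  ((2 * a) `^ p / a ^+ 2 * w ^+ 2 * (2 `^ p / 4) ^+ j)%:E.
Proof.
under eq_integral do rewrite EFinM.
rewrite ge0_integralZl_EFin ?powR_ge0 //; last first.
  by apply/measurable_EFinP; exact: measurable_indic.
rewrite integral_indic // setIT.
have ja_gt0 : (0 < 2 ^+ j * a)%R by rewrite mulr_gt0 ?exprn_gt0.
have := ge0_weakL2norm_levelset_le F0 Fw ja_gt0.
rewrite -lee_pdivlMl ?exprn_gt0 // => mu_le.
apply: le_trans (lee_wpmul2l _ mu_le) _; first by rewrite lee_fin powR_ge0.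
rewrite -!EFinM lee_fin le_eqVlt; apply/orP; left; apply/eqP.
have -> : height j = ((2 * a) `^ p * (2 `^ p) ^+ j)%R.
  rewrite /height exprS mulrAC (@powRM _ (2 * a)) ?mulr_ge0 ?exprn_ge0 ?(ltW a0) //.
  by rewrite -powR_mulrn // powRAC powR_mulrn ?powR_ge0.
rewrite expr_div_n exprMn -exprM mulnC exprM.
have -> : (2 ^+ 2 = 4 :> R)%R by rewrite expr2; ring.
by field; rewrite expf_neq0 ?gt_eqF.
Qed.

Lemma integral_poweR_gt_le :
  \int[mu]_x ((fun y => F y `^ p) \_ [set y | a%:E < F y]) x <=
  (layer_cake_const p a * w ^+ 2)%:E.
Proof.
have r_gt0 : (0 < 2 `^ p / 4 :> R)%R by rewrite divr_gt0 ?powR_gt0.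
have r_lt1 : (2 `^ p / 4 < 1 :> R)%R by rewrite ltr_pdivrMr // mul1r two_powR_lt4.
pose series x := \sum_(j <oo) (height j * \1_(level j) x)%:E.
apply: le_trans (ge0_le_integral_nonmeasurable mu (g := series) _ _) _.
- by move=> x; rewrite patchE; case: ifP => // _; exact: poweR_ge0.
- move=> x; rewrite patchE; case: ifPn => [/set_mem|_].
    exact: poweR_le_dyadic_series.
  exact: nneseries_ge0.
rewrite integral_nneseries //; last first.
  move=> j; apply/measurable_EFinP.
  by apply: measurable_funM => //; exact: measurable_indic.
pose K := ((2 * a) `^ p / a ^+ 2 * w ^+ 2)%R.
have K_ge0 : (0 <= K)%R.
  by rewrite /K mulr_ge0 ?sqr_ge0 // divr_ge0 ?powR_ge0 ?sqr_ge0.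
apply: (@le_trans _ _ (\sum_(j <oo) (K * (2 `^ p / 4) ^+ j)%:E)).
  apply: lee_nneseries => [j _ _|j _]; first exact: integral_ge0.
  exact: integral_term_le.
apply: le_trans (nneseries_geometric_le K_ge0 r_gt0 r_lt1) _.
rewrite lee_fin /layer_cake_const le_eqVlt; apply/orP; left; apply/eqP.
by rewrite /K; field; rewrite !gt_eqF // subr_gt0 two_powR_lt4.
Qed.

End layer_cake.

Lemma poweRD_le_twice (R : realType) (p : R) (x y : \bar R) :
  (0 <= p)%R -> 0 <= x -> x <= y -> (x + y) `^ p <= (2 `^ p)%:E * y `^ p.
Proof.
move=> p0 x0 xy; have y0 := le_trans x0 xy.
rewrite -poweR_EFin -poweRM // mule_natl mule2n.
by apply: gt0_ler_poweR; rewrite ?in_itv /= ?adde_ge0 ?leey ?leeD.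
Qed.

Lemma markov_poweR d (T : measurableType d) (R : realType)
    (mu : {measure set T -> \bar R}) (G : T -> \bar R) (p s : R) :
  measurable_fun setT G -> (0 < p)%R -> (0 < s)%R ->
  (s `^ p)%:E * mu [set x | s%:E < G x] <= \int[mu]_x G x `^ p.
Proof.
move=> mG p0 s0; have mGp := measurableT_comp (measurable_poweR p) mG.
have mA : measurable [set x | s%:E < G x].
  by have := emeasurable_fun_o_infty measurableT mG s%:E; rewrite setTI.
have mB : measurable (setT `&` [set x | (s `^ p)%:E <= `|G x `^ p|]).
  by apply: emeasurable_fun_c_infty => //; exact: measurableT_comp.
have -> : \int[mu]_x G x `^ p = \int[mu]_x `|G x `^ p|.
  by apply: eq_integral => x _; rewrite gee0_abs ?poweR_ge0.
apply: le_trans (le_integral_abse mu measurableT mGp (powR_gt0 _ s0)).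
apply: lee_wpmul2l; first by rewrite lee_fin powR_ge0.
apply: le_measure; rewrite ?inE // => x /= sG; split => //.
rewrite gee0_abs ?poweR_ge0 // -poweR_EFin.
have G_ge0 : 0 <= G x by apply: le_trans (ltW sG); rewrite lee_fin ltW.
apply: gt0_ler_poweR; rewrite ?in_itv /= ?leey ?andbT ?G_ge0 ?lee_fin //.
- exact: ltW p0.
- exact: ltW s0.
- exact: ltW sG.
Qed.

Section split_parts.
Context (T : Type) (R : realType) (k : R) (h : T -> \bar R).

Definition upper_part := h \_ [set x | k%:E < h x].
Definition lower_part := h \_ ~` [set x | k%:E < h x].

Lemma lower_partD_upper_part x : lower_part x + upper_part x = h x.
Proof.
rewrite /lower_part /upper_part !patchE in_setC.
by case: (x \in _); rewrite ?adde0 ?add0e.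
Qed.

Lemma upper_part_eq0_or_gt x : upper_part x = 0 \/ k%:E < upper_part x.
Proof. by rewrite /upper_part patchE; case: ifPn => [/set_mem|]; [right|left]. Qed.

Lemma lower_part_le x : (0 <= k)%R -> lower_part x <= k%:E.
Proof.
move=> k0; rewrite /lower_part patchE; case: ifPn => [/set_mem /= |_].
  by rewrite leNgt => /negP.
by rewrite lee_fin.
Qed.

End split_parts.

Section measurable_split_parts.
Context d (T : measurableType d) (R : realType) (k : R) (h : T -> \bar R).
Hypothesis mh : measurable_fun setT h.

Let mhk : measurable [set x | k%:E < h x].
Proof. by have := emeasurable_fun_o_infty measurableT mh k%:E; rewrite setTI. Qed.

Lemma measurable_upper_part : measurable_fun setT (upper_part k h).
Proof. by apply/(measurable_restrictT _ mhk); exact: measurable_funTS. Qed.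

Lemma measurable_lower_part : measurable_fun setT (lower_part k h).
Proof.
by apply/(measurable_restrictT _ (measurableC mhk)); exact: measurable_funTS.
Qed.

End measurable_split_parts.

Lemma layer_cake_const_ge0 (R : realType) (p a : R) : (0 < a)%R -> (p < 2)%R ->
  (0 <= layer_cake_const p a)%R.
Proof.
move=> a0 p2; rewrite divr_ge0 ?powR_ge0 // mulr_ge0 ?sqr_ge0 // subr_ge0.
by rewrite ler_pdivrMr // mul1r ltW // two_powR_lt4.
Qed.

Definition split_const (R : realType) (k p : R) : R :=
  4 + 4 * k `^ (2 - p) + 2 `^ p * (layer_cake_const p (k / 2) + 1).

Lemma split_const_gt0 (R : realType) (k p : R) : (0 < k)%R -> (p < 2)%R ->
  (0 < split_const k p)%R.
Proof.
move=> k0 p2; rewrite /split_const -addrA ltr_pwDl //.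
rewrite addr_ge0 ?mulr_ge0 ?powR_ge0 //.
by rewrite addr_ge0 // layer_cake_const_ge0 // divr_gt0.
Qed.

Section split_estimates.
Context d (T : measurableType d) (R : realType) (mu : {measure set T -> \bar R}).
Variables (F G : T -> \bar R) (k p w I : R).
Hypotheses (mF : measurable_fun setT F) (mG : measurable_fun setT G).
Hypotheses (F0 : forall x, 0 <= F x) (G0 : forall x, 0 <= G x).
Hypotheses (k0 : (0 < k)%R) (p0 : (0 < p)%R) (p2 : (p < 2)%R).
Hypotheses (Fw : weakL2norm mu F <= w%:E) (GI : \int[mu]_x G x `^ p <= I%:E).

Let S x := F x + G x.

Let S0 x : 0 <= S x. Proof. exact: adde_ge0. Qed.

Let mS : measurable_fun setT S. Proof. exact: emeasurable_funD. Qed.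

Let I0 : (0 <= I)%R.
Proof.
rewrite -lee_fin; apply: le_trans GI.
by apply: integral_ge0 => x _; exact: poweR_ge0.
Qed.

Let G_levelset_le s : (0 < s)%R -> (s <= k)%R ->
  (s ^+ 2)%:E * mu [set x | s%:E < G x] <= (k `^ (2 - p) * I)%:E.
Proof.
move=> s0 sk; have -> : (s ^+ 2 = s `^ (2 - p) * s `^ p)%R.
  rewrite -powRD ?(gt_eqF s0) ?implybT // subrK.
  exact: esym (powR_mulrn 2 (ltW s0)).
rewrite EFinM -muleA EFinM.
apply: lee_pmul.
- exact: powR_ge0.
- by rewrite mule_ge0 ?measure_ge0 //; exact: powR_ge0.
- rewrite lee_fin; apply: ge0_ler_powR;
    by rewrite ?nnegrE ?subr_ge0 ?(ltW p2) ?(ltW s0) ?(ltW k0).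
- exact: le_trans (markov_poweR mu mG p0 s0) GI.
Qed.

Lemma weakL2norm_lower_part_sqr_le :
  weakL2norm mu (lower_part k S) `^ 2 <= (4 * w ^+ 2 + 4 * k `^ (2 - p) * I)%:E.
Proof.
apply: weakL2norm_sqr_le => t t0.
have lower0 x : 0 <= lower_part k S x by exact: erestrict_ge0.
have [kt|tk] := leP k t.
  rewrite (_ : [set x | _] = set0) ?measure0 ?mule0.
    rewrite lee_fin addr_ge0 //; first by rewrite mulr_ge0 ?sqr_ge0.
    by rewrite !mulr_ge0 ?powR_ge0 ?I0.
  apply/seteqP; split => x //=; rewrite gee0_abs // => /lt_le_trans.
  by move/(_ _ (lower_part_le S x (ltW k0))); rewrite lte_fin ltNge kt.
have t2_gt0 : (0 < t / 2)%R by rewrite divr_gt0.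
pose A1 := [set x | (t / 2)%:E < F x]; pose A2 := [set x | (t / 2)%:E < G x].
have mA1 : measurable A1.
  by have := emeasurable_fun_o_infty measurableT mF (t / 2)%:E; rewrite setTI.
have mA2 : measurable A2.
  by have := emeasurable_fun_o_infty measurableT mG (t / 2)%:E; rewrite setTI.
have mlevel : measurable [set x | t%:E < `|lower_part k S x|].
  have := emeasurable_fun_o_infty measurableT
    (measurableT_comp (@abse_measurable R setT) (measurable_lower_part k mS)) t%:E.
  by rewrite setTI.
have level_sub : [set x | t%:E < `|lower_part k S x|] `<=` A1 `|` A2.
  move=> x /=; rewrite gee0_abs // /lower_part patchE.
  case: ifPn => _; last by rewrite ltNge lee_fin ltW.
  have [F_gt|F_le] := ltP (t / 2)%:E (F x); first by left.
  have [G_gt|G_le] := ltP (t / 2)%:E (G x); first by right.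
  by rewrite /S ltNge (splitr t) EFinD leeD.
apply: (@le_trans _ _ ((t ^+ 2)%:E * (mu A1 + mu A2))).
  apply: lee_wpmul2l; first by rewrite lee_fin sqr_ge0.
  apply: le_trans (measureU2 _ mA1 mA2).
  by apply: le_measure; rewrite ?inE //; exact: measurableU.
have t_sqr : (t ^+ 2 = 4 * (t / 2) ^+ 2)%R by field.
rewrite ge0_muleDr ?measure_ge0 // EFinD t_sqr -mulrA !(EFinM 4) -!muleA.
apply: leeD; apply: lee_wpmul2l; rewrite ?lee_fin //.
  exact: ge0_weakL2norm_levelset_le.
apply: G_levelset_le; rewrite // ler_pdivrMr //; lra.
Qed.

Let F_upper := (fun x => F x `^ p) \_ [set x | (k / 2)%:E < F x].

Let F_upper_ge0 x : 0 <= F_upper x.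
Proof. by apply: erestrict_ge0 => y _; exact: poweR_ge0. Qed.

Let upper_part_poweR_le x :
  `|upper_part k S x| `^ p <= (2 `^ p)%:E * (F_upper x + G x `^ p).
Proof.
have twop_ge0 : 0 <= (2 `^ p)%:E by rewrite lee_fin powR_ge0.
rewrite /upper_part patchE; case: ifPn => [/set_mem /= kS|_]; last first.
  by rewrite abse0 poweR0r ?gt_eqF // mule_ge0 // adde_ge0 ?poweR_ge0.
rewrite gee0_abs //; have [FG|GF] := leP (F x) (G x).
  apply: le_trans (poweRD_le_twice (ltW p0) (F0 x) FG) _.
  by rewrite lee_wpmul2l // leeDr.
have kF : (k / 2)%:E < F x.
  rewrite ltNge; apply: contraTN kS => F_le; rewrite -leNgt (splitr k) EFinD.
  exact: leeD F_le (le_trans (ltW GF) F_le).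
rewrite /F_upper patchE mem_set // /S addeC.
apply: le_trans (poweRD_le_twice (ltW p0) (G0 x) (ltW GF)) _.
by rewrite lee_wpmul2l // leeDl ?poweR_ge0.
Qed.

Lemma integral_upper_part_le : \int[mu]_x `|upper_part k S x| `^ p <=
  (2 `^ p * (layer_cake_const p (k / 2) * w ^+ 2 + I))%:E.
Proof.
have k2_gt0 : (0 < k / 2)%R by rewrite divr_gt0.
have mF_upper : measurable_fun setT F_upper.
  have mlevel : measurable [set x | (k / 2)%:E < F x].
    by have := emeasurable_fun_o_infty measurableT mF (k / 2)%:E; rewrite setTI.
  apply/(measurable_restrictT _ mlevel); apply: measurable_funTS.
  exact: measurableT_comp (measurable_poweR p) mF.
have mGp : measurable_fun setT (fun x => G x `^ p).
  exact: measurableT_comp (measurable_poweR p) mG.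
have sum_ge0 x : setT x -> 0 <= F_upper x + G x `^ p.
  by move=> _; rewrite adde_ge0 ?poweR_ge0.
apply: le_trans (ge0_le_integral_nonmeasurable mu _ upper_part_poweR_le) _.
  by move=> x; exact: poweR_ge0.
rewrite ge0_integralZl_EFin ?powR_ge0 //; last exact: emeasurable_funD.
rewrite ge0_integralD // ?EFinM; last by move=> x _; exact: poweR_ge0.
apply: lee_wpmul2l; first by rewrite lee_fin powR_ge0.
by rewrite EFinD leeD // integral_poweR_gt_le.
Qed.

Lemma weakL2norm_lower_part_lty : weakL2norm mu (lower_part k S) < +oo.
Proof.
apply: (@lty_poweRy _ _ 2); first by rewrite pnatr_eq0.
exact: le_lt_trans weakL2norm_lower_part_sqr_le (ltry _).
Qed.

Lemma Lnorm_upper_part_lty : 'N[mu]_p%:E[upper_part k S] < +oo.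
Proof.
apply: (@lty_poweRy _ _ p); first by rewrite gt_eqF.
rewrite poweR_Lnorm ?gt_eqF //.
exact: le_lt_trans integral_upper_part_le (ltry _).
Qed.

Lemma split_estimate :
  weakL2norm mu (lower_part k S) `^ 2 + Lnorm mu p%:E (upper_part k S) `^ p <=
  (split_const k p * (w ^+ 2 + I))%:E.
Proof.
rewrite poweR_Lnorm ?gt_eqF //.
apply: le_trans (leeD weakL2norm_lower_part_sqr_le integral_upper_part_le) _.
rewrite -EFinD lee_fin /split_const.
set L := layer_cake_const p (k / 2); set q := (2 `^ p)%R; set c := (k `^ (2 - p))%R.
have L_ge0 : (0 <= L)%R by rewrite layer_cake_const_ge0 // divr_gt0.
have q_ge0 : (0 <= q)%R by exact: powR_ge0.
have c_ge0 : (0 <= c)%R by exact: powR_ge0.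
have := sqr_ge0 w; move: (w ^+ 2)%R => W W0.
have := mulr_ge0 c_ge0 W0; have := mulr_ge0 q_ge0 W0.
have := mulr_ge0 (mulr_ge0 q_ge0 L_ge0) I0; have := I0; nra.
Qed.

End split_estimates.

Theorem lemma3p2 (R : realType) (n : nat) (U : set (Rn R n))
  (mU : measurable U) (p : R) (p1 : (1 < p)%R) (p2 : (p < 2)%R) :
  let mu := mrestr (lebesgue_n R n) mU in
  forall k : R, (0 < k)%R ->
  exists C : R, (0 < C)%R /\
  forall f g : Rn R n -> \bar R,
    measurable_fun U f -> (forall x, U x -> 0 <= f x) ->
    weakL2norm mu f < +oo ->
    measurable_fun U g -> (forall x, U x -> 0 <= g x) ->
    Lnorm mu p%:E g < +oo ->
    exists ft gt : Rn R n -> \bar R,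
      [/\ measurable_fun U ft /\ weakL2norm mu ft < +oo,
           measurable_fun U gt /\ Lnorm mu p%:E gt < +oo,
           (forall x, U x -> f x + g x = ft x + gt x),
           (forall x, U x -> gt x = 0 \/ k%:E < gt x) /\
           (forall x, U x -> ft x <= k%:E) &
           (weakL2norm mu ft) `^ 2%R + (Lnorm mu p%:E gt) `^ p
             <= C%:E * ((weakL2norm mu f) `^ 2%R + (Lnorm mu p%:E g) `^ p)].
Proof.
move=> mu k k0; have p0 : (0 < p)%R := lt_trans ltr01 p1.
exists (split_const k p); split; first exact: split_const_gt0.
move=> f g mf f0 wf mg g0 Lg.
pose F := f \_ U; pose G := g \_ U; pose S x := F x + G x.
have mF : measurable_fun setT F by exact/(measurable_restrictT _ mU).
have mG : measurable_fun setT G by exact/(measurable_restrictT _ mU).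
have F0 := erestrict_ge0 f0; have G0 := erestrict_ge0 g0.
pose w := fine (weakL2norm mu f); pose I := fine ('N[mu]_p%:E[g] `^ p).
have ew : weakL2norm mu f = w%:E by rewrite fineK // ge0_fin_numE ?weakL2norm_ge0.
have eI : 'N[mu]_p%:E[g] `^ p = I%:E.
  by rewrite fineK // ge0_fin_numE ?poweR_ge0 ?poweR_lty.
have Fw : weakL2norm mu F <= w%:E by rewrite weakL2norm_mrestr_restrict ew.
have GI : \int[mu]_x G x `^ p <= I%:E by rewrite -eI integral_restrict_poweR_le.
exists (lower_part k S), (upper_part k S); split.
- split; first exact/measurable_funTS/measurable_lower_part/emeasurable_funD.
  exact: weakL2norm_lower_part_lty mF mG F0 G0 k0 p0 p2 Fw GI.
- split; first exact/measurable_funTS/measurable_upper_part/emeasurable_funD.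
  exact: Lnorm_upper_part_lty mF mG F0 G0 k0 p0 p2 Fw GI.
- by move=> x Ux; rewrite lower_partD_upper_part /S /F /G !patchE mem_set.
- by split => x _; [exact: upper_part_eq0_or_gt | exact/lower_part_le/ltW].
rewrite ew poweR_EFin powR_mulrn ?fine_ge0 ?weakL2norm_ge0 // eI.
exact: split_estimate mF mG F0 G0 k0 p0 p2 Fw GI.
Qed.
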